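(* For every integer $k\geq 3$, there exists a bridgeless cubic graph $G$ such that $\mu_3(G)=k$.
   Context: A 1-factor is a spanning 1-regular subgraph. $\mu_3(G)$ is the minimum, over all lists (with possible repetition) of three 1-factors of $G$, of the number of edges of $G$ contained in none of them. *)

From mathcomp Require Import all_boot.
Set Implicit Arguments. Unset Strict Implicit. Unset Printing Implicit Defensive.

(* A finite loopless multigraph: vertex type V, edge type E, and each edge
   has a set of exactly two distinct end-vertices (parallel edges allowed). *)
Definition loopless (V E : finType) (ends : E -> {set V}) : Prop :=
  forall e, #|ends e| = 2.

Definition cubic (V E : finType) (ends : E -> {set V}) : Prop :=
  forall v : V, #|[set e | v \in ends e]| = 3.

Definition adj_minus (V E : finType) (ends : E -> {set V}) (e : E) : rel V :=
  fun x y => [exists f, (f != e) && (x \in ends f) && (y \in ends f) && (x != y)].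

Definition bridgeless (V E : finType) (ends : E -> {set V}) : Prop :=
  forall (e : E) (u v : V), u \in ends e -> v \in ends e ->
    connect (adj_minus ends e) u v.

Definition one_factor (V E : finType) (ends : E -> {set V}) (M : {set E}) : Prop :=
  forall v : V, #|[set e in M | v \in ends e]| = 1.

Definition uncovered3 (E : finType) (M1 M2 M3 : {set E}) : nat :=
  #|~: (M1 :|: M2 :|: M3)|.

Definition mu3_eq (V E : finType) (ends : E -> {set V}) (k : nat) : Prop :=
  (exists M1 M2 M3 : {set E},
      [/\ one_factor ends M1, one_factor ends M2, one_factor ends M3
        & uncovered3 M1 M2 M3 = k]) /\
  (forall M1 M2 M3 : {set E},
      one_factor ends M1 -> one_factor ends M2 -> one_factor ends M3 ->
      k <= uncovered3 M1 M2 M3).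

From mathcomp Require Import all_boot zify.
Set Implicit Arguments. Unset Strict Implicit. Unset Printing Implicit Defensive.

(* mu_3 is additive under disjoint union, because the 1-factors of a disjoint
   union are exactly the unions of 1-factors of the two parts; being loopless,
   cubic and bridgeless is preserved as well.  So it suffices to have bridgeless
   cubic graphs with mu_3 = 3, 4, 5 and to add copies of the first one: the
   Petersen graph, and the Petersen graph with a digon inserted into three,
   resp. five, of its edges.  For these small multigraphs everything is checked
   by computation; the lower bound on mu_3 inspects all triples of 1-factors,
   which are enumerated edge by edge, discarding every partial choice that
   covers a vertex twice or leaves uncovered a vertex all of whose edges are
   decided. *)

Lemma card_sum_set (T1 T2 : finType) (A : {set T1 + T2}) :
  #|A| = #|inl @^-1: A| + #|inr @^-1: A|.
Proof.
rewrite -!sum1_card (big_sumType _ (mem A)).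
by congr (addn _ _); apply: (eq_bigl (op := addn)) => x; rewrite !inE.
Qed.

Lemma card_sum_setl (T1 T2 : finType) (A : {set T1 + T2}) (B : {set T1}) :
  inl @^-1: A = B -> inr @^-1: A = set0 -> #|A| = #|B|.
Proof. by move=> AlB Ar0; rewrite card_sum_set AlB Ar0 cards0 addn0. Qed.

Lemma card_sum_setr (T1 T2 : finType) (A : {set T1 + T2}) (B : {set T2}) :
  inl @^-1: A = set0 -> inr @^-1: A = B -> #|A| = #|B|.
Proof. by move=> Al0 ArB; rewrite card_sum_set Al0 ArB cards0. Qed.

Lemma connect_homo (T T' : finType) (e : rel T) (e' : rel T') (f : T -> T') :
  {homo f : x y / e x y >-> e' x y} ->
  {homo f : x y / connect e x y >-> connect e' x y}.
Proof.
move=> fe x _ /connectP[p ep ->]; apply/connectP.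
by exists (map f p); [exact: homo_path fe ep | rewrite last_map].
Qed.

Section DisjointUnion.
Variables (V1 E1 V2 E2 : finType) (ends1 : E1 -> {set V1}) (ends2 : E2 -> {set V2}).

Definition union_ends (e : E1 + E2) : {set V1 + V2} :=
  [set v | match e, v with
           | inl e1, inl v1 => v1 \in ends1 e1
           | inr e2, inr v2 => v2 \in ends2 e2
           | _, _ => false
           end].

Definition union_set (M1 : {set E1}) (M2 : {set E2}) : {set E1 + E2} :=
  [set e | match e with inl e1 => e1 \in M1 | inr e2 => e2 \in M2 end].

Lemma union_setKl M1 M2 : inl @^-1: union_set M1 M2 = M1.
Proof. by apply/setP => e; rewrite !inE. Qed.

Lemma union_setKr M1 M2 : inr @^-1: union_set M1 M2 = M2.
Proof. by apply/setP => e; rewrite !inE. Qed.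

Lemma loopless_union : loopless ends1 -> loopless ends2 -> loopless union_ends.
Proof.
move=> loop1 loop2 [e|e]; [rewrite -(loop1 e) | rewrite -(loop2 e)].
  by apply: card_sum_setl; apply/setP => v; rewrite !inE.
by apply: card_sum_setr; apply/setP => v; rewrite !inE.
Qed.

Lemma cubic_union : cubic ends1 -> cubic ends2 -> cubic union_ends.
Proof.
move=> cub1 cub2 [v|v]; [rewrite -(cub1 v) | rewrite -(cub2 v)].
  by apply: card_sum_setl; apply/setP => e; rewrite !inE.
by apply: card_sum_setr; apply/setP => e; rewrite !inE.
Qed.

Lemma one_factor_union M : one_factor union_ends M <->
  one_factor ends1 (inl @^-1: M) /\ one_factor ends2 (inr @^-1: M).
Proof.
have incl v : #|[set e in M | inl v \in union_ends e]| =
              #|[set e in inl @^-1: M | v \in ends1 e]|.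
  by apply: card_sum_setl; apply/setP => e; rewrite !inE ?andbF.
have incr v : #|[set e in M | inr v \in union_ends e]| =
              #|[set e in inr @^-1: M | v \in ends2 e]|.
  by apply: card_sum_setr; apply/setP => e; rewrite !inE ?andbF.
split=> [fM | [fM1 fM2] [v|v]]; last by rewrite incr.
- by split=> v; [rewrite -incl | rewrite -incr].
- by rewrite incl.
Qed.

Lemma uncovered3_union (M1 M2 M3 : {set E1 + E2}) : uncovered3 M1 M2 M3 =
  uncovered3 (inl @^-1: M1) (inl @^-1: M2) (inl @^-1: M3) +
  uncovered3 (inr @^-1: M1) (inr @^-1: M2) (inr @^-1: M3).
Proof. by rewrite /uncovered3 card_sum_set !preimsetC !preimsetU. Qed.

Lemma mu3_eq_union k1 k2 :
  mu3_eq ends1 k1 -> mu3_eq ends2 k2 -> mu3_eq union_ends (k1 + k2).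
Proof.
case=> [[A1 [A2 [A3 [fA1 fA2 fA3 uA]]]] minA].
case=> [[B1 [B2 [B3 [fB1 fB2 fB3 uB]]]] minB]; split.
  exists (union_set A1 B1), (union_set A2 B2), (union_set A3 B3).
  split; try by apply/one_factor_union; rewrite union_setKl union_setKr.
  by rewrite uncovered3_union !union_setKl !union_setKr uA uB.
move=> M1 M2 M3 /one_factor_union[f1l f1r] /one_factor_union[f2l f2r].
by move=> /one_factor_union[f3l f3r]; rewrite uncovered3_union leq_add ?minA ?minB.
Qed.

Lemma bridgeless_union :
  bridgeless ends1 -> bridgeless ends2 -> bridgeless union_ends.
Proof.
move=> br1 br2 [e|e] [u|u] [v|v]; rewrite !inE // => eu ev.
- apply: connect_homo (br1 e u v eu ev) => x y /existsP[f adj_f].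
  by apply/existsP; exists (inl f); rewrite !inE.
- apply: connect_homo (br2 e u v eu ev) => x y /existsP[f adj_f].
  by apply/existsP; exists (inr f); rewrite !inE.
Qed.

End DisjointUnion.

Definition bridgeless_cubic_mu3 (k : nat) : Prop :=
  exists (V E : finType) (ends : E -> {set V}),
    [/\ loopless ends, cubic ends, bridgeless ends & mu3_eq ends k].

Lemma bridgeless_cubic_mu3D k1 k2 :
  bridgeless_cubic_mu3 k1 -> bridgeless_cubic_mu3 k2 -> bridgeless_cubic_mu3 (k1 + k2).
Proof.
move=> [V1 [E1 [ends1 [loop1 cub1 br1 mu1]]]] [V2 [E2 [ends2 [loop2 cub2 br2 mu2]]]].
exists _, _, (union_ends ends1 ends2); split.
- exact: loopless_union.
- exact: cubic_union.
- exact: bridgeless_union.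
- exact: mu3_eq_union.
Qed.

Lemma card_ord_count k (P : pred nat) : #|[set i : 'I_k | P i]| = count P (iota 0 k).
Proof.
have -> : count P (iota 0 k) = count (fun i : 'I_k => P i) (enum 'I_k).
  by rewrite -val_enum_ord count_map.
by rewrite cardsE cardE -size_filter enumT /enum_mem.
Qed.

Lemma mem_iota_ord k (i : 'I_k) : val i \in iota 0 k.
Proof. by rewrite mem_iota ltn_ord. Qed.

Lemma adj_minus_sym (V E : finType) (ends : E -> {set V}) (e : E) :
  symmetric (adj_minus ends e).
Proof.
move=> x y; apply/existsP/existsP => -[f /andP[/andP[/andP[fe xf] yf] xy]];
  by exists f; rewrite fe xf yf eq_sym xy.
Qed.

Fixpoint uncovered_bits (a b c : seq bool) : nat :=
  if (a, b, c) is (x :: a', y :: b', z :: c') then ~~ (x || y || z) + uncovered_bits a' b' c'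
  else 0.

Section EdgeList.
Variables (n : nat) (edges : seq (nat * nat)).
Local Notation m := (size edges).

Definition incident (i v : nat) : bool :=
  let: (a, b) := nth (0, 0) edges i in (a == v) || (b == v).

Definition list_ends (e : 'I_m) : {set 'I_n} := [set v : 'I_n | incident e v].

Definition incident_edges (v : nat) : seq nat := [seq i <- iota 0 m | incident i v].

Definition loopless_check : bool :=
  all (fun i => count (incident i) (iota 0 n) == 2) (iota 0 m).

Lemma loopless_list_ends : loopless_check -> loopless list_ends.
Proof.
move=> /allP loop e; rewrite /list_ends (card_ord_count n (incident e)).
exact/eqP/loop/mem_iota_ord.
Qed.

Definition cubic_check : bool := all (fun v => size (incident_edges v) == 3) (iota 0 n).

Lemma cubic_list_ends : cubic_check -> cubic list_ends.
Proof.
move=> /allP cub v; have /eqP <- := cub v (mem_iota_ord v).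
have -> : [set e | v \in list_ends e] = [set e : 'I_m | incident e v].
  by apply/setP => e; rewrite !inE.
by rewrite (card_ord_count m (incident^~ v)) size_filter.
Qed.

Definition bits_of_set (M : {set 'I_m}) : seq bool := [seq i \in M | i <- enum 'I_m].
Definition set_of_bits (w : seq bool) : {set 'I_m} := [set i : 'I_m | nth false w i].

Lemma size_bits_of_set M : size (bits_of_set M) = m.
Proof. by rewrite size_map size_enum_ord. Qed.

Lemma nth_bits_of_set M (i : 'I_m) : nth false (bits_of_set M) i = (i \in M).
Proof. by rewrite (nth_map i) ?size_enum_ord // nth_ord_enum. Qed.

Lemma set_of_bitsK w : size w = m -> bits_of_set (set_of_bits w) = w.
Proof.
move=> sw; apply: (@eq_from_nth _ false); rewrite size_bits_of_set // => i lt_im.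
by rewrite (nth_bits_of_set _ (Ordinal lt_im)) inE.
Qed.

Definition one_factor_bits (w : seq bool) : bool :=
  all (fun v => count (nth false w) (incident_edges v) == 1) (iota 0 n).

Lemma one_factor_bitsP M : one_factor list_ends M <-> one_factor_bits (bits_of_set M).
Proof.
have cardE v : #|[set e in M | v \in list_ends e]| =
               count (nth false (bits_of_set M)) (incident_edges v).
  have -> : [set e in M | v \in list_ends e] =
            [set e : 'I_m | nth false (bits_of_set M) e && incident e v].
    by apply/setP => e; rewrite !inE nth_bits_of_set.
  pose chosen_at_v i := nth false (bits_of_set M) i && incident i v.
  by rewrite (card_ord_count m chosen_at_v) count_filter.
split=> [fM | /allP fM v]; last by rewrite cardE; apply/eqP/fM/mem_iota_ord.
by apply/allP => v; rewrite mem_iota => /andP[_ lt_vn]; rewrite -(cardE (Ordinal lt_vn)) fM.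
Qed.

Lemma uncovered3_bits M1 M2 M3 :
  uncovered3 M1 M2 M3 = uncovered_bits (bits_of_set M1) (bits_of_set M2) (bits_of_set M3).
Proof.
rewrite /uncovered3 cardE /enum_mem -enumT /bits_of_set size_filter.
by elim: (enum _) => //= i s ->; rewrite !inE.
Qed.

Definition partial_one_factor (w : seq bool) : bool :=
  all (fun v => let c := count (nth false w) (incident_edges v) in
                (c <= 1) && (all (gtn (size w)) (incident_edges v) ==> (c == 1)))
      (iota 0 n).

Definition extend_partial (S : seq (seq bool)) : seq (seq bool) :=
  [seq w <- [seq rcons y b | y <- S, b <- [:: true; false]] | partial_one_factor w].

Definition one_factor_candidates : seq (seq bool) :=
  [seq w <- iter m extend_partial [:: [::]] | one_factor_bits w].

Lemma partial_one_factor_take w j :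
  one_factor_bits w -> partial_one_factor (take j w).
Proof.
move=> /allP fw; apply/allP => v /fw /eqP cnt1 /=.
have nth_take_w i : nth false (take j w) i = (i < j) && nth false w i.
  case: ltnP => [lt_ij | le_ji]; first by rewrite nth_take.
  by rewrite nth_default // size_take_min (leq_trans (geq_minl _ _)).
apply/andP; split.
  by rewrite -cnt1; apply: sub_count => i; rewrite nth_take_w => /andP[].
apply/implyP => /allP decided; rewrite -cnt1; apply/eqP/eq_in_count => i /decided.
by rewrite nth_take_w /= size_take_min leq_min => /andP[->].
Qed.

Lemma size_extend_partial j w : w \in iter j extend_partial [:: [::]] -> size w = j.
Proof.
elim: j w => [|j IH] w /=; first by rewrite inE => /eqP ->.
by rewrite mem_filter => /andP[_ /allpairsP[[y b] [/IH <- _ ->]]]; rewrite size_rcons.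
Qed.

Lemma one_factor_candidates_complete w :
  size w = m -> one_factor_bits w -> w \in one_factor_candidates.
Proof.
move=> sw fw; rewrite mem_filter fw /=.
suff take_in j : j <= m -> take j w \in iter j extend_partial [:: [::]].
  by have := take_in m (leqnn m); rewrite -{1}sw take_size.
elim: j => [|j IH] lt_jm; first by rewrite take0 inE.
rewrite /= mem_filter partial_one_factor_take // (take_nth false) ?sw //.
by apply: allpairs_f; [exact: IH (ltnW lt_jm) | case: nth].
Qed.

Lemma one_factor_candidate w : w \in one_factor_candidates ->
  one_factor list_ends (set_of_bits w) /\ bits_of_set (set_of_bits w) = w.
Proof.
rewrite mem_filter => /andP[fw /size_extend_partial sw].
by rewrite set_of_bitsK //; split=> //; apply/one_factor_bitsP; rewrite set_of_bitsK.
Qed.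

Definition mu3_check (k : nat) : bool :=
  let L := one_factor_candidates in
  has (fun a => has (fun b => has (fun c => uncovered_bits a b c == k) L) L) L &&
  all (fun a => all (fun b => all (fun c => k <= uncovered_bits a b c) L) L) L.

Lemma mu3_eq_list_ends k : mu3_check k -> mu3_eq list_ends k.
Proof.
case/andP => /hasP[a /one_factor_candidate[fa ea]] /hasP[b /one_factor_candidate[fb eb]].
move=> /hasP[c /one_factor_candidate[fc ec] /eqP uabc] /allP lbL; split.
  exists (set_of_bits a), (set_of_bits b), (set_of_bits c).
  by rewrite uncovered3_bits ea eb ec.
move=> M1 M2 M3 /one_factor_bitsP f1 /one_factor_bitsP f2 /one_factor_bitsP f3.
have cand M : one_factor_bits (bits_of_set M) -> bits_of_set M \in one_factor_candidates.
  by apply: one_factor_candidates_complete; rewrite size_bits_of_set.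
have /allP/(_ _ (cand _ f2))/allP/(_ _ (cand _ f3)) := lbL _ (cand _ f1).
by rewrite uncovered3_bits.
Qed.

Definition other_end (j x : nat) : nat :=
  let: (a, b) := nth (0, 0) edges j in if a == x then b else a.

Lemma incident_other_end j x : incident j (other_end j x).
Proof. by rewrite /incident /other_end; case: nth => a b; case: ifP; rewrite eqxx ?orbT. Qed.

Definition neighbours_minus (e x : nat) : seq nat :=
  [seq y <- [seq other_end j x | j <- iota 0 m & (j != e) && incident j x]
     | (y != x) && (y < n)].

Fixpoint reachable_minus (e u t : nat) : seq nat :=
  if t is t'.+1 then
    let R := reachable_minus e u t' in undup (R ++ flatten (map (neighbours_minus e) R))
  else [:: u].

Lemma reachable_minus_connect (e : 'I_m) (u : 'I_n) t y :
  y \in reachable_minus e u t ->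
  exists2 z : 'I_n, val z = y & connect (adj_minus list_ends e) u z.
Proof.
elim: t y => [|t IH] y /=; first by rewrite inE => /eqP ->; exists u; rewrite ?connect0.
rewrite mem_undup mem_cat => /orP[/IH // | /flatten_mapP[x /IH[z <- uz]]].
rewrite mem_filter => /andP[/andP[yz lt_yn] /mapP[j]].
rewrite mem_filter mem_iota => /andP[/andP[je jz] /andP[_ lt_jm]] yj; subst y.
exists (Ordinal lt_yn) => //; apply: connect_trans uz (connect1 _).
apply/existsP; exists (Ordinal lt_jm).
by rewrite !inE -(inj_eq val_inj) /= je jz incident_other_end eq_sym yz.
Qed.

Definition bridgeless_check : bool :=
  all (fun e => let: (a, b) := nth (0, 0) edges e in b \in reachable_minus e a n)
      (iota 0 m).

Lemma bridgeless_list_ends : bridgeless_check -> bridgeless list_ends.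
Proof.
move=> /allP br e u v; have := br e (mem_iota_ord e).
rewrite !inE /incident; case: nth => a b reach_ab.
have conn_eq (x y : 'I_n) : x = y :> nat -> connect (adj_minus list_ends e) x y.
  by move=> /ord_inj ->; exact: connect0.
have conn_ab (x y : 'I_n) : a = x -> b = y -> connect (adj_minus list_ends e) x y.
  move=> ax by_; rewrite ax in reach_ab; have [z zb xz] := reachable_minus_connect reach_ab.
  by have -> : y = z by apply: ord_inj; rewrite zb.
case/orP => /eqP eu /orP[] /eqP ev.
- by apply: conn_eq; rewrite -eu -ev.
- exact: conn_ab.
- by rewrite (sym_connect_sym (adj_minus_sym _ _)); exact: conn_ab.
- by apply: conn_eq; rewrite -eu -ev.
Qed.

End EdgeList.

Definition petersen : seq (nat * nat) :=
  [:: (0, 1); (1, 2); (2, 3); (3, 4); (4, 0); (0, 5); (1, 6); (2, 7); (3, 8); (4, 9);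
      (5, 7); (6, 8); (7, 9); (8, 5); (9, 6)].

Definition insert_digon (x : nat) (edges : seq (nat * nat)) (i : nat) : seq (nat * nat) :=
  let: (a, b) := nth (0, 0) edges i in
  set_nth (0, 0) edges i (a, x) ++ [:: (x, x.+1); (x, x.+1); (x.+1, b)].

Fixpoint insert_digons (x : nat) (edges : seq (nat * nat)) (ids : seq nat) :=
  if ids is i :: ids' then insert_digons x.+2 (insert_digon x edges i) ids' else edges.

Lemma bridgeless_cubic_mu3_check n edges k :
  [&& loopless_check n edges, cubic_check n edges, bridgeless_check n edges
    & mu3_check n edges k] ->
  bridgeless_cubic_mu3 k.
Proof.
case/and4P => loop cub br mu; exists _, _, (@list_ends n edges); split.
- exact: loopless_list_ends.
- exact: cubic_list_ends.
- exact: bridgeless_list_ends.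
- exact: mu3_eq_list_ends.
Qed.

Lemma bridgeless_cubic_mu3_3 : bridgeless_cubic_mu3 3.
Proof.
apply: (bridgeless_cubic_mu3_check (n := 10) (edges := petersen)).
by vm_compute.
Qed.

Lemma bridgeless_cubic_mu3_4 : bridgeless_cubic_mu3 4.
Proof.
apply: (bridgeless_cubic_mu3_check (n := 16)
          (edges := insert_digons 10 petersen [:: 0; 2; 13])).
by vm_compute.
Qed.

Lemma bridgeless_cubic_mu3_5 : bridgeless_cubic_mu3 5.
Proof.
apply: (bridgeless_cubic_mu3_check (n := 20)
          (edges := insert_digons 10 petersen [:: 0; 2; 9; 10; 11])).
by vm_compute.
Qed.

Theorem mainTheorem8 :
  forall k : nat, 3 <= k ->
  exists (V E : finType) (ends : E -> {set V}),
    [/\ loopless ends, cubic ends, bridgeless ends & mu3_eq ends k].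
Proof.
elim/ltn_ind=> k IH le3k; rewrite -/(bridgeless_cubic_mu3 k).
have [le_k5 | lt5k] := leqP k 5.
  case: k le3k le_k5 {IH} => [|[|[|[|[|[|]]]]]] // _ _.
  - exact: bridgeless_cubic_mu3_3.
  - exact: bridgeless_cubic_mu3_4.
  - exact: bridgeless_cubic_mu3_5.
rewrite (_ : k = k - 3 + 3); last by lia.
apply: bridgeless_cubic_mu3D; last exact: bridgeless_cubic_mu3_3.
by apply: IH; lia.
Qed.
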